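(* Let $g\ge0$, $n\ge1$, $G\in\mathbb{G}_{g,n}$, and let $T_1,T_2$ be tails of $G$. If $T_1\cap T_2\ne\emptyset$, then either one of $T_1,T_2$ contains the other, or $T_1\cup T_2=G$.
   Context: $\mathbb{G}_{g,n}$ is the set of isomorphism classes of dual graphs of stable $n$-pointed curves of genus $g$: connected graphs with vertex genera and $n$ labelled legs, of total genus $g$, each vertex stable. A tail of $G$ is a connected vertex-induced subgraph $T$ (i.e. determined by a vertex set, containing all edges of $G$ with both ends in it and the legs rooted in it) that is joined to its complement by exactly one edge of $G$. *)

From mathcomp Require Import all_boot.
Set Implicit Arguments. Unset Strict Implicit. Unset Printing Implicit Defensive.

(* A (representative of a) dual graph of a stable n-pointed curve.
   Vertices: finite type sg_V; edges: finite type sg_E, each edge e has two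
   endpoints sg_ends e (a loop has equal endpoints; multiple edges allowed);
   vertex genera sg_genus; the n labelled legs are attached via sg_leg. *)
Record sgraph (n : nat) := SGraph {
  sg_V : finType;
  sg_E : finType;
  sg_ends : sg_E -> sg_V * sg_V;
  sg_genus : sg_V -> nat;
  sg_leg : 'I_n -> sg_V
}.

Section Defs.
Variable n : nat.
Variable G : sgraph n.
Local Notation V := (sg_V G).
Local Notation E := (sg_E G).

Definition sg_adj : rel V := fun u w =>
  [exists e : E, (sg_ends e == (u, w)) || (sg_ends e == (w, u))].

(* valence = number of half-edges (loops count twice) plus legs at v *)
Definition sg_val (v : V) : nat :=
  #|[set e : E | (sg_ends e).1 == v]| + #|[set e : E | (sg_ends e).2 == v]|
  + #|[set i : 'I_n | @sg_leg n G i == v]|.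

Definition sg_connected : Prop := forall u w : V, connect sg_adj u w.

(* stability of every vertex: 2 h(v) - 2 + val(v) > 0 *)
Definition sg_stable : Prop := forall v : V, 3 <= 2 * sg_genus v + sg_val v.

(* total genus: g = b_1(G) + sum_v h(v), with b_1 = #E - #V + 1 (G connected) *)
Definition sg_total_genus (g : nat) : Prop :=
  g + #|V| = #|E| + 1 + \sum_(v : V) sg_genus v.

Definition in_Ggn (g : nat) : Prop :=
  0 < #|V| /\ sg_connected /\ sg_stable /\ sg_total_genus g.

Definition induced_connected (S : {set V}) : Prop :=
  S != set0 /\
  forall u w, u \in S -> w \in S ->
    connect [rel x y | [&& x \in S, y \in S & sg_adj x y]] u w.

Definition cut_size (S : {set V}) : nat :=
  #|[set e : E | ((sg_ends e).1 \in S) != ((sg_ends e).2 \in S)]|.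

(* a tail: connected vertex-induced subgraph joined to its complement by
   exactly one edge; identified with its vertex set *)
Definition is_tail (S : {set V}) : Prop :=
  induced_connected S /\ cut_size S = 1.

End Defs.

From mathcomp Require Import all_boot.

(* If T2 is a tail and T1 is a connected set meeting T2 without lying in it,
   then a path inside T1 must leave T2, and it can only do so along the unique
   edge joining T2 to its complement; so that edge has both ends in T1.
   Symmetrically, the edge leaving T1 has both ends in T2.  If some vertex
   lay outside T1 :|: T2, a path to it from T1 :&: T2 would leave the union along
   an edge leaving T1 or T2, i.e. along one of these two edges, whose ends
   are both in the union: a contradiction. *)

Set Implicit Arguments.
Unset Strict Implicit.
Unset Printing Implicit Defensive.

Lemma connect_crossing (T : finType) (r : rel T) (P : pred T) u w :
  connect r u w -> P u -> ~~ P w -> exists x y, [/\ r x y, P x & ~~ P y].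
Proof.
move/connectP=> [p r_p ->]; elim: p u r_p => [|z p IHp] u /= r_p Pu Pw.
  by rewrite Pu in Pw.
case/andP: r_p => r_uz r_p; case Pz: (P z); first exact: IHp r_p Pz Pw.
by exists u, z; rewrite Pz.
Qed.

Section Tails.
Variables (n : nat) (G : sgraph n).
Implicit Types (S T A B : {set sg_V G}) (e f : sg_E G).

Definition sg_crosses S e : bool :=
  ((sg_ends e).1 \in S) != ((sg_ends e).2 \in S).

Lemma sg_crosses_edge S x y e :
  (sg_ends e == (x, y)) || (sg_ends e == (y, x)) ->
  x \in S -> y \notin S -> sg_crosses S e.
Proof.
by move=> /orP[]/eqP e_xy xS yS; rewrite /sg_crosses e_xy /= xS (negbTE yS).
Qed.

Lemma sg_crosses_setU A B e :
  sg_crosses (A :|: B) e -> sg_crosses A e || sg_crosses B e.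
Proof.
by rewrite /sg_crosses !inE; do 4 case: (_ \in _).
Qed.

Lemma cut_size1_uniq S e f :
  cut_size S = 1 -> sg_crosses S e -> sg_crosses S f -> e = f.
Proof.
move=> /eqP/cards1P[z cutS] Se Sf.
have: e \in [set z] by rewrite -cutS inE.
have: f \in [set z] by rewrite -cutS inE.
by rewrite !inE => /eqP-> /eqP->.
Qed.

Lemma connected_crossing S a b :
  sg_connected G -> a \in S -> b \notin S -> exists e, sg_crosses S e.
Proof.
move=> connG aS bS.
have [x [y [/existsP[e e_xy] xS yS]]] :=
  connect_crossing (P := fun z => z \in S) (connG a b) aS bS.
by exists e; exact: sg_crosses_edge e_xy xS yS.
Qed.

Lemma tail_cut_edge_inside S T e :
  induced_connected S -> cut_size T = 1 -> S :&: T != set0 ->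
  ~~ (S \subset T) -> sg_crosses T e ->
  (sg_ends e).1 \in S /\ (sg_ends e).2 \in S.
Proof.
move=> [_ connS] cutT /set0Pn[a /setIP[aS aT]] /subsetPn[b bS bT] Te.
have [x [y [/and3P[xS yS /existsP[f f_xy]] xT yT]]] :=
  connect_crossing (P := fun z => z \in T) (connS a b aS bS) aT bT.
rewrite -(cut_size1_uniq cutT (sg_crosses_edge f_xy xT yT) Te).
by case/orP: f_xy => /eqP->.
Qed.

End Tails.

Theorem lemma4p13 (g n : nat) (G : sgraph n) (T1 T2 : {set sg_V G}) :
  1 <= n -> in_Ggn G g -> is_tail T1 -> is_tail T2 ->
  T1 :&: T2 != set0 ->
  T1 \subset T2 \/ T2 \subset T1 \/ T1 :|: T2 = [set: sg_V G].
Proof.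
move=> _ [_ [connG _]] [conn1 cut1] [conn2 cut2] meet12.
have [|not12] := boolP (T1 \subset T2); first by left.
have [|not21] := boolP (T2 \subset T1); first by right; left.
right; right; apply/eqP; rewrite eqEsubset subsetT.
apply/subsetP => d _; apply: contraT => dU.
have [a /setIP[a1 _]] := set0Pn _ meet12.
have aU : a \in T1 :|: T2 by rewrite inE a1.
have [e eU] := connected_crossing connG aU dU.
case/orP: (sg_crosses_setU eU) => [eT1 | eT2].
- rewrite setIC in meet12.
  have [x2 y2] := tail_cut_edge_inside conn2 cut1 meet12 not21 eT1.
  by move: eU; rewrite /sg_crosses !inE x2 y2 !orbT.
- have [x1 y1] := tail_cut_edge_inside conn1 cut2 meet12 not12 eT2.
  by move: eU; rewrite /sg_crosses !inE x1 y1.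
Qed.
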